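(* Let $R$ be a domain which is a D-K elementary divisor ring. Then $R$ is a ring of simple range 2.
   Context: All rings are associative with nonzero identity. For $x\in R$, $RxR$ denotes the two-sided ideal generated by $x$. A nonzero element $a\in R$ is invariant if $aR=Ra$. Two matrices $A,B$ over $R$ are equivalent if $B=PAQ$ for some invertible matrices $P,Q$ over $R$. $R$ is a D-K elementary divisor ring if every (rectangular) matrix $A$ over $R$ is equivalent to a matrix $\mathrm{diag}(\varepsilon_1,\dots,\varepsilon_r,0,\dots,0)$ such that $R\varepsilon_{i+1}R\subseteq \varepsilon_iR\cap R\varepsilon_i$ for all $i=1,\dots,r-1$ and $\varepsilon_1,\dots,\varepsilon_{r-1}$ are invariant elements. A ring $R$ is called a ring of simple range 2 if for all $a,b,c\in R$ with $c\neq 0$ and $RaR+RbR+RcR=R$ there exist $p,q\in R$ such that $R(pa+qb)R+RpcR=R$. *)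

From HB Require Import structures.
From mathcomp Require Import all_boot all_order all_algebra.
Set Implicit Arguments. Unset Strict Implicit. Unset Printing Implicit Defensive.
Import GRing.Theory.
Local Open Scope ring_scope.

Definition is_domain (R : nzRingType) : Prop :=
  forall a b : R, a * b = 0 -> a = 0 \/ b = 0.

Definition in_ideal2 (R : nzRingType) (x y : R) : Prop :=
  exists n (r s : 'I_n -> R), y = \sum_(i < n) r i * x * s i.

Definition ideals3_full (R : nzRingType) (a b c : R) : Prop :=
  forall y : R, exists u v w, [/\ in_ideal2 a u, in_ideal2 b v, in_ideal2 c w
                              & y = u + v + w].

Definition ideals2_full (R : nzRingType) (a b : R) : Prop :=
  forall y : R, exists u v, [/\ in_ideal2 a u, in_ideal2 b v & y = u + v].

Definition invariant_elt (R : nzRingType) (a : R) : Prop :=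
  [/\ a != 0,
      (forall x : R, exists y, a * x = y * a) &
      (forall x : R, exists y, x * a = a * y)].

Definition invertible_mx (R : nzRingType) (n : nat) (P : 'M[R]_n) : Prop :=
  exists P' : 'M[R]_n, P *m P' = 1%:M /\ P' *m P = 1%:M.

Definition rdiag_mx (R : nzRingType) (m n r : nat) (eps : nat -> R) : 'M[R]_(m, n) :=
  \matrix_(i < m, j < n) (if (i == j :> nat) && (i < r)%N then eps i else 0).

(* D-K elementary divisor ring (entries indexed from 0). *)
Definition DK_elementary_divisor_ring (R : nzRingType) : Prop :=
  forall (m n : nat) (A : 'M[R]_(m, n)),
  exists (P : 'M[R]_m) (Q : 'M[R]_n) (r : nat) (eps : nat -> R),
    [/\ invertible_mx P, invertible_mx Q,
        (r <= minn m n)%N,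
        P *m A *m Q = rdiag_mx m n r eps
      & (forall i, (i.+1 < r)%N ->
           invariant_elt (eps i) /\
           (forall z, in_ideal2 (eps i.+1) z ->
              (exists t, z = eps i * t) /\ (exists t, z = t * eps i)))].

Definition simple_range2 (R : nzRingType) : Prop :=
  forall a b c : R, c != 0 -> ideals3_full a b c ->
  exists p q : R, ideals2_full (p * a + q * b) (p * c).

From mathcomp Require Import all_boot all_order all_algebra.
Set Implicit Arguments. Unset Strict Implicit. Unset Printing Implicit Defensive.
Import GRing.Theory.
Local Open Scope ring_scope.

(* Diagonalize A = [[a, c], [b, 0]] as P A Q = diag(e_0, e_1, ...). The (0,0)
   entry of P A Q gives e_0 = (p a + q b) Q_00 + (p c) Q_10 with p = P_00,
   q = P_01, so Re_0R lies in R(pa+qb)R + R(pc)R. Conversely every entry of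
   the diagonal form lies in Re_0R (the e_i form a divisibility chain), hence
   so do a, b, c (entries of P^-1 D Q^-1), and RaR + RbR + RcR = R forces
   Re_0R = R. *)

Section TwoSidedIdeal.
Variable R : nzRingType.
Implicit Types x y z t : R.

Lemma in_ideal2_refl x : in_ideal2 x x.
Proof. by exists 1%N, (fun _ => 1), (fun _ => 1); rewrite big_ord1 mul1r mulr1. Qed.

Lemma in_ideal2_0 x : in_ideal2 x 0.
Proof. by exists 0%N, (fun _ => 0), (fun _ => 0); rewrite big_ord0. Qed.

Lemma in_ideal2D x y z : in_ideal2 x y -> in_ideal2 x z -> in_ideal2 x (y + z).
Proof.
move=> [n1 [r1 [s1 ->]]] [n2 [r2 [s2 ->]]].
exists (n1 + n2)%N,
  (fun i => match split i with inl j => r1 j | inr k => r2 k end),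
  (fun i => match split i with inl j => s1 j | inr k => s2 k end).
rewrite big_split_ord /=; congr (_ + _); apply: eq_bigr => i _.
- by have /= -> := unsplitK (inl i : 'I_n1 + 'I_n2).
- by have /= -> := unsplitK (inr i : 'I_n1 + 'I_n2).
Qed.

Lemma in_ideal2Ml x y t : in_ideal2 x y -> in_ideal2 x (t * y).
Proof.
move=> [n [r [s ->]]]; exists n, (fun i => t * r i), s.
by rewrite mulr_sumr; apply: eq_bigr => i _; rewrite !mulrA.
Qed.

Lemma in_ideal2Mr x y t : in_ideal2 x y -> in_ideal2 x (y * t).
Proof.
move=> [n [r [s ->]]]; exists n, r, (fun i => s i * t).
by rewrite mulr_suml; apply: eq_bigr => i _; rewrite !mulrA.
Qed.

Lemma in_ideal2_sum x n (F : 'I_n -> R) :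
  (forall i, in_ideal2 x (F i)) -> in_ideal2 x (\sum_(i < n) F i).
Proof.
by move=> xF; apply: (big_ind (in_ideal2 x)) => //;
  [exact: in_ideal2_0 | exact: in_ideal2D].
Qed.

Lemma in_ideal2_trans x y z : in_ideal2 x y -> in_ideal2 y z -> in_ideal2 x z.
Proof.
move=> xy [n [r [s ->]]]; apply: in_ideal2_sum => i.
exact/in_ideal2Mr/in_ideal2Ml.
Qed.

Lemma ideals3_full_in_ideal2 a b c e :
  ideals3_full a b c -> in_ideal2 e a -> in_ideal2 e b -> in_ideal2 e c ->
  forall y, in_ideal2 e y.
Proof.
move=> abc ea eb ec y; have [u [v [w [au bv cw ->]]]] := abc y.
by apply: in_ideal2D; [apply: in_ideal2D |];
  [exact: in_ideal2_trans au | exact: in_ideal2_trans bv | exact: in_ideal2_trans cw].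
Qed.

Lemma ideals2_full_of_lin (f g s1 s2 : R) :
  in_ideal2 (f * s1 + g * s2) 1 -> ideals2_full f g.
Proof.
move=> e1 y; have [n [r [s ->]]] : in_ideal2 (f * s1 + g * s2) y.
  by rewrite -[y]mul1r; exact: in_ideal2Mr.
exists (\sum_(i < n) r i * f * (s1 * s i)), (\sum_(i < n) r i * g * (s2 * s i)).
split; [| | rewrite -big_split /=; apply: eq_bigr => i _];
  try by apply: in_ideal2_sum => i; apply/in_ideal2Mr/in_ideal2Ml/in_ideal2_refl.
by rewrite mulrDr mulrDl !mulrA.
Qed.

End TwoSidedIdeal.

Section EntryIdeal.
Variable R : nzRingType.

Lemma in_ideal2_mulmx e m n p q (M : 'M[R]_(m, n)) (D : 'M[R]_(n, p))
    (N : 'M[R]_(p, q)) :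
  (forall i j, in_ideal2 e (D i j)) -> forall i j, in_ideal2 e ((M *m D *m N) i j).
Proof.
move=> eD i j; rewrite mxE; apply: in_ideal2_sum => l; apply: in_ideal2Mr.
by rewrite mxE; apply: in_ideal2_sum => k; apply: in_ideal2Ml.
Qed.

Lemma in_ideal2_equiv_mx e m n (P : 'M[R]_m) (A : 'M[R]_(m, n)) (Q : 'M[R]_n) :
  invertible_mx P -> invertible_mx Q ->
  (forall i j, in_ideal2 e ((P *m A *m Q) i j)) -> forall i j, in_ideal2 e (A i j).
Proof.
move=> [P' [_ P'P]] [Q' [QQ' _]] ePAQ.
have -> : A = P' *m (P *m A *m Q) *m Q'.
  by rewrite !mulmxA P'P mul1mx -!mulmxA QQ' mulmx1.
exact: in_ideal2_mulmx.
Qed.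

Lemma in_ideal2_rdiag_mx m n r (eps : nat -> R) :
  (forall i, (i.+1 < r)%N -> in_ideal2 (eps i) (eps i.+1)) ->
  forall i j, in_ideal2 (rdiag_mx m.+1 n.+1 r eps 0 0) (rdiag_mx m.+1 n.+1 r eps i j).
Proof.
move=> chain i j; rewrite [X in in_ideal2 _ X]mxE.
case: ifP => [/andP[_ ir] | _]; last exact: in_ideal2_0.
rewrite mxE /= (leq_ltn_trans (leq0n i) ir).
elim: (nat_of_ord i) ir => [|k IHk] kr; first exact: in_ideal2_refl.
exact: in_ideal2_trans (IHk (ltnW kr)) (chain k kr).
Qed.

End EntryIdeal.

Theorem theorem3p3 (R : nzRingType) :
  is_domain R -> DK_elementary_divisor_ring R -> simple_range2 R.
Proof.
move=> _ DK a b c _ abc.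
pose A : 'M[R]_2 := \matrix_(i, j) if i == 0 then (if j == 0 then a else c)
                                    else (if j == 0 then b else 0).
have [P [Q [r [eps [invP invQ _ PAQ chain]]]]] := DK 2%N 2%N A.
set e := rdiag_mx 2 2 r eps 0 0.
have eD : forall i j, in_ideal2 e ((P *m A *m Q) i j).
  rewrite PAQ; apply: in_ideal2_rdiag_mx => i ir.
  have [[t ->] _] := (chain i ir).2 _ (in_ideal2_refl (eps i.+1)).
  exact/in_ideal2Mr/in_ideal2_refl.
have eA := in_ideal2_equiv_mx invP invQ eD.
have e1 : in_ideal2 e 1.
  apply: (ideals3_full_in_ideal2 abc);
    [move: (eA 0 0) | move: (eA 1 0) | move: (eA 0 1)]; by rewrite mxE.
exists (P 0 0), (P 0 1); apply: (@ideals2_full_of_lin _ _ _ (Q 0 0) (Q 1 0)).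
suff <- : e = (P 0 0 * a + P 0 1 * b) * Q 0 0 + P 0 0 * c * Q 1 0 by [].
rewrite /e -PAQ !mxE !big_ord_recl !big_ord0 !mxE !big_ord_recl !big_ord0 !mxE /=.
have -> : lift ord0 ord0 = 1 :> 'I_2 by apply: val_inj.
have -> : ord0 = 0 :> 'I_2 by apply: val_inj.
by rewrite !mulr0 !addr0.
Qed.
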